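(* Every left nilpotent monoid and every supernilpotent monoid is cancellative.
   Context: Monoids are regarded as semigroups $(S,\cdot)$. For congruences $\alpha_1,\dots,\alpha_n$, $M(\alpha_1,\dots,\alpha_n)$ is the subsemigroup of $S^{\{0,1\}^n}$ generated by all $g$ such that for some $i$ and $(a,b)\in\alpha_i$, $g(x)=a$ if $x_i=0$ and $g(x)=b$ if $x_i=1$; $[\alpha_1,\dots,\alpha_n]$ is the smallest congruence $\delta$ such that for all $f\in M(\alpha_1,\dots,\alpha_n)$: if $(f(x0),f(x1))\in\delta$ for all $x\in\{0,1\}^{n-1}\setminus\{(1,\dots,1)\}$ then $(f(1,\dots,1,0),f(1,\dots,1,1))\in\delta$. With $1$ total and $0$ trivial congruence: $(1]^1=1$, $(1]^{k+1}=[1,(1]^k]$. $S$ is left nilpotent if $(1]^{d+1}=0$ for some $d\in\mathbb N$, and supernilpotent if the $(d+1)$-ary commutator $[1,\dots,1]=0$ for some $d\in\mathbb N$. *)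

From mathcomp Require Import all_boot.
Set Implicit Arguments. Unset Strict Implicit. Unset Printing Implicit Defensive.

Record monoid := Monoid {
  carrier :> Type;
  mop : carrier -> carrier -> carrier;
  mone : carrier;
  mopA : forall x y z, mop x (mop y z) = mop (mop x y) z;
  mop1x : forall x, mop mone x = x;
  mopx1 : forall x, mop x mone = x }.

Definition relS (S : monoid) := S -> S -> Prop.

Definition congruence (S : monoid) (d : relS S) : Prop :=
  (forall x, d x x) /\ (forall x y, d x y -> d y x) /\
  (forall x y z, d x y -> d y z -> d x z) /\
  (forall a b c e, d a b -> d c e -> d (mop a c) (mop b e)).

Definition total_rel (S : monoid) : relS S := fun _ _ => True.

Definition is_zero_rel (S : monoid) (d : relS S) : Prop :=
  forall x y, d x y <-> x = y.

(* {0,1}^(n+1) is {ffun 'I_n.+1 -> bool}; false = 0, true = 1.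
   The last coordinate is ord_max. *)
Definition cube (n : nat) := {ffun 'I_n.+1 -> bool}.

(* M(alpha_0, ..., alpha_n): subsemigroup of S^{{0,1}^(n+1)} generated
   by the functions x |-> (if x_i = 0 then a else b), (a,b) in alpha_i. *)
Inductive Mgen (S : monoid) (n : nat) (alpha : 'I_n.+1 -> relS S)
  : (cube n -> S) -> Prop :=
  | Mgen_gen (i : 'I_n.+1) (a b : S) (g : cube n -> S) :
      alpha i a b -> (forall x, g x = if x i then b else a) -> Mgen alpha g
  | Mgen_mul (f g h : cube n -> S) :
      Mgen alpha f -> Mgen alpha g -> (forall x, h x = mop (f x) (g x)) ->
      Mgen alpha h.

Definition setlast (n : nat) (y : cube n) (b : bool) : cube n :=
  [ffun i => if i == ord_max then b else y i].

Definition ones (n : nat) : cube n := [ffun _ => true].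

Definition term_cond (S : monoid) (n : nat) (alpha : 'I_n.+1 -> relS S)
  (d : relS S) : Prop :=
  forall f, Mgen alpha f ->
    (forall y : cube n, (exists i : 'I_n.+1, i != ord_max /\ y i = false) ->
        d (f (setlast y false)) (f (setlast y true))) ->
    d (f (setlast (ones n) false)) (f (setlast (ones n) true)).

Definition commutator (S : monoid) (n : nat) (alpha : 'I_n.+1 -> relS S)
  : relS S :=
  fun x y => forall d, congruence d -> term_cond alpha d -> d x y.

Definition binary_comm (S : monoid) (a b : relS S) : relS S :=
  @commutator S 1 (fun i => if val i == 0 then a else b).

(* (1]^k for k >= 1, indexed so that lower_central S k = (1]^(k+1) *)
Fixpoint lower_central (S : monoid) (k : nat) : relS S :=
  match k with
  | 0 => @total_rel S
  | k'.+1 => @binary_comm S (@total_rel S) (@lower_central S k')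
  end.

Definition left_nilpotent (S : monoid) : Prop :=
  exists d : nat, is_zero_rel (@lower_central S d).

Definition supernilpotent (S : monoid) : Prop :=
  exists d : nat, is_zero_rel (@commutator S d (fun _ => @total_rel S)).

Definition cancellative (S : monoid) : Prop :=
  (forall a b c : S, mop a b = mop a c -> b = c) /\
  (forall a b c : S, mop b a = mop c a -> b = c).

From Pilot Require Import Defs.
From mathcomp Require Import all_boot.
Set Implicit Arguments. Unset Strict Implicit. Unset Printing Implicit Defensive.

(* If [a * b = a * c], consider f(x) = g_(n-1)(x) * ... * g_0(x) * h(x) in
   M(alpha_0, ..., alpha_n), where g_i(x) is [a] if x_i = 0 and [1] if x_i = 1,
   and h(x) is [b] or [c] according to the last coordinate.  As soon as some x_i with i < n vanishes, the rightmost
   such factor [a] sits next to h and the two values of f agree; at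
   x = (1, ..., 1) they are [b] and [c].  So the term condition forces
   [(b, c)] into every commutator whose first arguments are total, in
   particular into the iterated commutators (1]^k and [1, ..., 1].  Right
   cancellation is the same argument in the converse monoid. *)

Definition converse (S : monoid) : monoid :=
  @Defs.Monoid S (fun x y => @mop S y x) (mone S)
    (fun x y z => esym (@mopA S z y x)) (@mopx1 S) (@mop1x S).

Definition cancel_pair (S : monoid) (b c : S) : Prop :=
  exists a, mop a b = mop a c \/ mop b a = mop c a.

Lemma Mgen_converse (S : monoid) n (alpha : 'I_n.+1 -> relS S) f :
  Mgen (S := converse S) alpha f -> Mgen alpha f.
Proof.
elim=> [i a b g Hab Hg | f1 f2 g _ IH1 _ IH2 Hg].
- exact: (@Mgen_gen S n alpha i a b g Hab Hg).
- exact: (@Mgen_mul S n alpha f2 f1 g IH2 IH1 Hg).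
Qed.

Lemma commutator_converse (S : monoid) n (alpha : 'I_n.+1 -> relS S) b c :
  commutator (S := converse S) alpha b c -> commutator alpha b c.
Proof.
move=> Hbc d [dr [ds [dt dc]]] Hd; apply: Hbc.
  by do 2!split=> //; split=> // x y z w Hxy Hzw; exact: dc Hzw Hxy.
by move=> f /Mgen_converse; apply: Hd.
Qed.

Lemma inord_neq_max n k : k < n -> (inord k : 'I_n.+1) != ord_max.
Proof.
move=> kn; apply/eqP => /(congr1 val) /=; rewrite inordK; last exact: ltnW.
by move=> k_eq_n; rewrite k_eq_n ltnn in kn.
Qed.

Section LeftCancellation.
Variables (S : monoid) (n : nat) (alpha : 'I_n.+1 -> relS S) (a b c : S).
Hypothesis alpha_a1 : forall i, i != ord_max -> alpha i a (mone S).
Hypothesis alpha_bc : alpha ord_max b c.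
Hypothesis abc : mop a b = mop a c.

Definition switch (x : cube n) : S := if x ord_max then c else b.

Definition factor (k : nat) (x : cube n) : S := if x (inord k) then mone S else a.

Fixpoint stacked (k : nat) (x : cube n) : S :=
  if k is k'.+1 then mop (factor k' x) (stacked k' x) else switch x.

Lemma Mgen_stacked k : k <= n -> Mgen alpha (stacked k).
Proof.
elim: k => [_|k IH kn] /=; first exact: Mgen_gen alpha_bc _.
apply: Mgen_mul (IH (ltnW kn)) _ => //.
exact: Mgen_gen (alpha_a1 (inord_neq_max kn)) _.
Qed.

Lemma stacked_switch k (x : cube n) :
  (forall i, i < k -> x (inord i)) -> stacked k x = switch x.
Proof.
elim: k => [|k IH] //= Hx; rewrite /factor Hx // mop1x; apply: IH => i ik.
exact/Hx/ltnW.
Qed.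

Lemma factor_setlast k y v : k < n -> factor k (setlast y v) = factor k y.
Proof. by move=> kn; rewrite /factor ffunE (negbTE (inord_neq_max kn)). Qed.

Lemma stacked_setlast_eq k (y : cube n) :
  k <= n -> (exists i : 'I_n.+1, i < k /\ y i = false) ->
  stacked k (setlast y false) = stacked k (setlast y true).
Proof.
elim: k => [|k IH] kn [i [ik yi]] //=; rewrite !factor_setlast //.
case: (boolP [exists j : 'I_n.+1, (j < k) && ~~ y j]).
  case/existsP=> j /andP [jk /negbTE yj].
  by rewrite (IH (ltnW kn)) //; exists j.
(* Otherwise x_k is the first vanishing coordinate, so f = a * h there. *)
rewrite negb_exists => /forallP y_true.
have {}y_true j : j < k -> y (inord j).
  move=> jk; have := y_true (inord j); rewrite inordK ?jk ?negbK //.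
  exact: leqW (ltn_trans jk kn).
have yk : y (inord k) = false.
  move: ik; rewrite ltnS leq_eqVlt => /orP [/eqP i_k | ik].
    by rewrite -i_k inord_val.
  by have := y_true _ ik; rewrite inord_val yi.
have setlast_true v j : j < k -> setlast y v (inord j).
  by move=> jk; rewrite ffunE (negbTE (inord_neq_max (ltn_trans jk kn))) y_true.
rewrite /factor yk !stacked_switch; try exact: setlast_true.
by rewrite /switch !ffunE eqxx.
Qed.

Lemma commutator_left_cancel : commutator alpha b c.
Proof.
move=> d [dr _] term_d.
have ones_true v j : j < n -> setlast (ones n) v (inord j).
  by move=> jn; rewrite !ffunE (negbTE (inord_neq_max jn)).
have := term_d _ (Mgen_stacked (leqnn n)).
rewrite !stacked_switch; try exact: ones_true.
rewrite /switch !ffunE eqxx; apply=> y [i [i_max yi]].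
rewrite stacked_setlast_eq //; exists i; split=> //.
rewrite ltn_neqAle -ltnS ltn_ord andbT.
by apply: contra i_max => /eqP i_n; exact/eqP/val_inj.
Qed.
End LeftCancellation.

Lemma commutator_cancel_pair (S : monoid) n (alpha : 'I_n.+1 -> relS S) b c :
  (forall i, i != ord_max -> forall a, alpha i a (mone S)) ->
  alpha ord_max b c -> cancel_pair b c -> commutator alpha b c.
Proof.
move=> alpha_1 alpha_bc [a [abc | bac]].
  exact: commutator_left_cancel (fun i hi => alpha_1 i hi a) alpha_bc abc.
apply: commutator_converse.
exact: (@commutator_left_cancel (converse S) n alpha a b c
  (fun i hi => alpha_1 i hi a)).
Qed.

Lemma lower_central_cancel_pair (S : monoid) k (b c : S) :
  cancel_pair b c -> lower_central k b c.
Proof.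
move=> bc; elim: k => [|k IH] //=.
by apply: commutator_cancel_pair => // -[[|[|i]] ?].
Qed.

Lemma zero_rel_cancellative (S : monoid) (d : relS S) :
  is_zero_rel d -> (forall b c : S, cancel_pair b c -> d b c) -> cancellative S.
Proof.
by move=> d0 d_canc; split=> a b c abc; apply/d0/d_canc; exists a; [left | right].
Qed.

Theorem lemma4p3 (S : monoid) :
  (left_nilpotent S -> cancellative S) /\ (supernilpotent S -> cancellative S).
Proof.
split=> [[k lc0] | [k comm0]].
  exact: zero_rel_cancellative lc0 (@lower_central_cancel_pair S k).
apply: zero_rel_cancellative comm0 _ => b c.
exact: commutator_cancel_pair.
Qed.
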